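(* Let $j$ and $k$ be two non-negative integers. Then we have \[\mathrm{Tv}(\mathbb{Z}^{j+1} \times \mathbb{R}^k,m) > 2\mathrm{Tv}(\mathbb{Z}^j \times \mathbb{R}^k, m)-2.\]
   Context: For $S\subseteq\mathbb{R}^d$ and an integer $m\geq 2$, the Tverberg number $\mathrm{Tv}(S,m)$ is the smallest positive integer $n$ such that any multiset of $n$ points in $S$ admits a partition into $m$ submultisets $A_1,\dots,A_m$ with $\left(\bigcap_{i=1}^m\mathrm{conv}(A_i)\right)\cap S\neq\varnothing$ (and $\mathrm{Tv}(S,m)=\infty$ if no such number exists). *)

From HB Require Import structures.
From mathcomp Require Import all_boot all_order all_algebra.
From mathcomp Require Import boolp classical_sets reals.
Set Implicit Arguments. Unset Strict Implicit. Unset Printing Implicit Defensive.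
Import Order.TTheory GRing.Theory Num.Theory.
Local Open Scope ring_scope.
Local Open Scope classical_set_scope.

(* A multiset of n points is a family
   x : 'I_n -> 'rV_d; a partition into m submultisets is a colouring
   f : 'I_n -> 'I_m (part i = the points p with f p = i). *)

Definition in_conv (R : realType) (d n m : nat) (x : 'I_n -> 'rV[R]_d)
  (f : 'I_n -> 'I_m) (i : 'I_m) (y : 'rV[R]_d) : Prop :=
  exists w : 'I_n -> R,
    [/\ forall p, 0 <= w p,
        forall p, f p != i -> w p = 0,
        \sum_(p < n) w p = 1 &
        \sum_(p < n) w p *: x p = y].

Definition TvP (R : realType) (d : nat) (S : set 'rV[R]_d) (m n : nat) : Prop :=
  forall x : 'I_n -> 'rV[R]_d, (forall p, S (x p)) ->
    exists f : 'I_n -> 'I_m, exists y : 'rV[R]_d,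
      S y /\ forall i : 'I_m, in_conv x f i y.

Definition TvPb (R : realType) (d : nat) (S : set 'rV[R]_d) (m : nat) : pred nat :=
  fun n => `[< (0 < n)%N /\ TvP S m n >].

(* The Tverberg number: Some n = smallest positive n, None = infinity. *)
Definition Tv (R : realType) (d : nat) (S : set 'rV[R]_d) (m : nat) : option nat :=
  match pselect (exists n, TvPb S m n) with
  | left h => Some (ex_minn h)
  | right _ => None
  end.

(* Z^j x R^k inside R^(j+k): the first j coordinates are integers. *)
Definition ZR (R : realType) (j k : nat) : set 'rV[R]_(j + k) :=
  [set v | forall i : 'I_(j + k), (i < j)%N -> v 0 i \in Num.int].

From mathcomp Require Import all_boot all_order all_algebra.
From mathcomp Require Import boolp classical_sets reals.
From mathcomp Require Import zify.

(* Given a multiset x of a points of Z^j x R^k, place one copy of it at height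
   0 and one at height 1 in Z^(j+1) x R^k. A Tverberg point of these 2a points
   has an integral height that is a convex combination of 0s and 1s, so it lies
   on one of the two levels; all the weight of every part then sits on that
   level, and the partition restricted to that copy of x is a Tverberg
   partition of x. Hence Tverberg for 2a points in Z^(j+1) x R^k gives
   Tverberg for a points in Z^j x R^k, i.e.
   Tv(Z^j x R^k) <= ceil(Tv(Z^(j+1) x R^k) / 2). *)

Set Implicit Arguments. Unset Strict Implicit. Unset Printing Implicit Defensive.
Import Order.TTheory GRing.Theory Num.Theory.

Local Open Scope ring_scope.

Section Monotonicity.
Variables (R : realType) (d m : nat) (S : set 'rV[R]_d).
Hypothesis m_gt0 : (0 < m)%N.

Lemma TvP_succ n : TvP S m n -> TvP S m n.+1.
Proof.
move=> TvPn x Sx.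
have [f [y [Sy convy]]] := TvPn (x \o lift ord_max) (fun q => Sx _).
exists (fun p => oapp f (Ordinal m_gt0) (unlift ord_max p)), y; split=> // i.
have [w [w_ge0 w_supp w_sum w_comb]] := convy i.
have lift_max (q : 'I_n) : widen_ord (leqnSn n) q = lift ord_max q.
  by apply: val_inj; rewrite /= /bump leqNgt ltn_ord.
exists (fun p => oapp w 0 (unlift ord_max p)); split.
- by move=> p; case: (unlift ord_max p).
- by move=> p; case: (unlift ord_max p) => //= q; apply: w_supp.
- rewrite big_ord_recr /= unlift_none addr0 -w_sum.
  by apply: eq_bigr => q _; rewrite lift_max liftK.
- rewrite big_ord_recr /= unlift_none scale0r addr0 -w_comb.
  by apply: eq_bigr => q _; rewrite lift_max liftK.
Qed.

Lemma TvP_leq n n' : (n <= n')%N -> TvP S m n -> TvP S m n'.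
Proof.
move=> /subnK <-; elim: (n' - n)%N => [//|t IHt] TvPn.
by rewrite addSn; apply/TvP_succ/IHt.
Qed.

End Monotonicity.

Section TwoLevels.
Variables (R : realType) (d a b : nat).
Variables (x0 : 'I_a -> 'rV[R]_d) (x1 : 'I_b -> 'rV[R]_d).

Definition height (y : 'rV[R]_(1 + d)) : R := y 0 (lshift d ord0).

Definition stack : 'I_(a + b) -> 'rV[R]_(1 + d) := fun p =>
  match split p with
  | inl q => row_mx (const_mx 0) (x0 q)
  | inr q => row_mx (const_mx 1) (x1 q)
  end.

Lemma stack_lshift q : stack (lshift b q) = row_mx (const_mx 0) (x0 q).
Proof. by rewrite /stack (unsplitK (inl _ q)). Qed.

Lemma stack_rshift q : stack (rshift a q) = row_mx (const_mx 1) (x1 q).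
Proof. by rewrite /stack (unsplitK (inr _ q)). Qed.

Lemma height_stack_comb (w : 'I_(a + b) -> R) :
  height (\sum_p w p *: stack p) = \sum_q w (rshift a q).
Proof.
rewrite /height summxE big_split_ord /=.
rewrite big1 ?add0r => [|q _]; last first.
  by rewrite stack_lshift mxE row_mxEl mxE mulr0.
by apply: eq_bigr => q _; rewrite stack_rshift mxE row_mxEl mxE mulr1.
Qed.

Lemma rsubmx_stack_comb (w : 'I_(a + b) -> R) :
  rsubmx (\sum_p w p *: stack p) =
    \sum_q w (lshift b q) *: x0 q + \sum_q w (rshift a q) *: x1 q.
Proof.
rewrite linear_sum big_split_ord /=.
by congr (_ + _); apply: eq_bigr => q _;
  rewrite linearZ /= ?stack_lshift ?stack_rshift row_mxKr.
Qed.

Lemma in_conv_stack_height m (f : 'I_(a + b) -> 'I_m) i y :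
  in_conv stack f i y -> 0 <= height y <= 1.
Proof.
move=> [w [w_ge0 _ w_sum <-]]; rewrite height_stack_comb sumr_ge0 //=.
by rewrite -w_sum big_split_ord /= lerDr sumr_ge0.
Qed.

Lemma in_conv_stack_height0 m (f : 'I_(a + b) -> 'I_m) i y :
  in_conv stack f i y -> height y = 0 ->
  in_conv x0 (f \o lshift b) i (rsubmx y).
Proof.
move=> [w [w_ge0 w_supp w_sum <-]]; rewrite height_stack_comb => w1_sum.
have w1_0 q : w (rshift a q) = 0 by apply: (psumr_eq0P _ w1_sum).
exists (w \o lshift b); split=> [p|p /w_supp //||]; first exact: w_ge0.
- by rewrite -w_sum big_split_ord /= w1_sum addr0.
- rewrite rsubmx_stack_comb [X in _ + X]big1 ?addr0 // => q _.
  by rewrite w1_0 scale0r.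
Qed.

Lemma in_conv_stack_height1 m (f : 'I_(a + b) -> 'I_m) i y :
  in_conv stack f i y -> height y = 1 ->
  in_conv x1 (f \o @rshift a b) i (rsubmx y).
Proof.
move=> [w [w_ge0 w_supp w_sum <-]]; rewrite height_stack_comb => w1_sum.
have w0_sum : \sum_q w (lshift b q) = 0.
  by apply: (addIr 1); rewrite add0r -[in RHS]w_sum big_split_ord /= w1_sum.
have w0_0 q : w (lshift b q) = 0 by apply: (psumr_eq0P _ w0_sum).
exists (w \o @rshift a b); split=> [p|p /w_supp //|//|]; first exact: w_ge0.
rewrite rsubmx_stack_comb [X in X + _]big1 ?add0r // => q _.
by rewrite w0_0 scale0r.
Qed.

End TwoLevels.

Lemma int_num_01 (R : realType) (t : R) :
  t \in Num.int -> 0 <= t <= 1 -> (t == 0) || (t == 1).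
Proof.
move=> /intrP [z ->] /andP[]; rewrite ler0z lerz1 => z_ge0 z_le1.
have /orP[] : (z == 0) || (z == 1) by lia.
all: by move=> /eqP ->; rewrite eqxx ?orbT.
Qed.

Section IntegerLattice.
Variables (R : realType) (j k : nat).

Lemma ZR_row_mx c (v : 'rV[R]_(j + k)) :
  c \in Num.int -> @ZR R j k v ->
  @ZR R j.+1 k (row_mx (const_mx c : 'rV_1) v).
Proof.
move=> c_int Zv i i_lt; rewrite mxE.
case: splitP => p i_p; first by rewrite mxE.
by apply: Zv; move: i_lt; rewrite i_p /= add1n ltnS.
Qed.

Lemma ZR_height (y : 'rV[R]_(1 + (j + k))) :
  @ZR R j.+1 k y -> height y \in Num.int.
Proof. by apply. Qed.

Lemma ZR_rsubmx (y : 'rV[R]_(1 + (j + k))) :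
  @ZR R j.+1 k y -> @ZR R j k (rsubmx y).
Proof. by move=> Zy i i_lt; rewrite mxE; apply: Zy; rewrite /= add1n ltnS. Qed.

Lemma TvP_ZR_of_double m a : (0 < m)%N ->
  TvP (@ZR R j.+1 k) m (a + a) -> TvP (@ZR R j k) m a.
Proof.
move=> m_gt0 TvP2a x Zx.
have Zstack p : @ZR R j.+1 k (stack x x p).
  rewrite /stack; case: split => q;
  by apply: ZR_row_mx; rewrite ?rpred0 ?rpred1.
have [f [y [Zy convy]]] := TvP2a (stack x x) Zstack.
have y_height := in_conv_stack_height (convy (Ordinal m_gt0)).
have Zy_rsubmx := ZR_rsubmx Zy.
case/orP: (int_num_01 (ZR_height Zy) y_height) => /eqP y_level.
- exists (f \o lshift a), (rsubmx (y : 'rV_(1 + (j + k)))); split=> // i.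
  exact: in_conv_stack_height0 (convy i) y_level.
- exists (f \o @rshift a a), (rsubmx (y : 'rV_(1 + (j + k)))); split=> // i.
  exact: in_conv_stack_height1 (convy i) y_level.
Qed.

End IntegerLattice.

Section TverbergNumber.
Variables (R : realType) (d m : nat) (S : set 'rV[R]_d).

Variant Tv_spec : option nat -> Prop :=
  | Tv_finite n of (0 < n)%N & TvP S m n
      & (forall a, (0 < a)%N -> TvP S m a -> (n <= a)%N) : Tv_spec (Some n)
  | Tv_infinite of (forall a, (0 < a)%N -> ~ TvP S m a) : Tv_spec None.

Lemma Tv_specP : Tv_spec (Tv S m).
Proof.
rewrite /Tv; case: pselect => [TvP_ex | no_TvP].
  case: ex_minnP => n /asboolP[n_gt0 TvPn] n_min.
  by constructor=> // a a_gt0 TvPa; apply/n_min/asboolP.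
by constructor=> a a_gt0 TvPa; apply: no_TvP; exists a; apply/asboolP.
Qed.

End TverbergNumber.

Theorem proposition1 (R : realType) (j k m : nat) (hm : (2 <= m)%N) :
  match Tv (@ZR R j.+1 k) m, Tv (@ZR R j k) m with
  | None, _ => True
  | Some N, Some n => is_true (2 * n - 2 < N)%N
  | Some _, None => False
  end.
Proof.
have m_gt0 : (0 < m)%N by apply: leq_trans hm.
case: Tv_specP => [N N_gt0 TvPN _|//].
have TvP_half : TvP (@ZR R j k) m (N.+1 %/ 2).
  apply: (TvP_ZR_of_double m_gt0); apply: (TvP_leq m_gt0 _ TvPN); lia.
have half_gt0 : (0 < N.+1 %/ 2)%N by lia.
case: Tv_specP => [n _ _ n_min | no_TvP]; last exact: no_TvP TvP_half.
by have := n_min _ half_gt0 TvP_half; lia.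
Qed.
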